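(* Assume (A). Let $H\in(1,1+\lambda)$ be the unique abscissa with $f(H)=\mu H$. Let $M>2\mu/\sigma^2$, and let $A,b>0$ satisfy $$A>\max\Big\{M+H,\ \tfrac{f(0)}{c}M+H,\ \tfrac{\sigma^2M^2}{\sigma^2M-2\mu},\ \tfrac{f(0)}{c}\cdot\tfrac{\sigma^2M^2}{\sigma^2M-2\mu}\Big\},$$ $$\tfrac1M\max\Big\{\ln\tfrac{A}{A-M},\ \ln\tfrac{A}{A-\frac{f(0)}{c}M}\Big\}<b<\tfrac1M\min\Big\{\ln\tfrac{A}{H},\ \ln\big(\tfrac{\sigma^2}{2\mu}M\big)\Big\}.$$ Define $\underline\psi(x)=1-e^{-x}$ and $\overline\psi(x)=\frac AM\big(1-e^{-M(x\wedge b)}\big)$ for $x\ge0$. Then $\underline\psi$ is a viscosity subsolution and $\overline\psi$ is a viscosity supersolution of the ODE (E) on $[0,\infty)$, and $\underline\psi\le\overline\psi$ on $[0,\infty)$.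
   Context: Constants $\mu\in\mathbb R$, $\sigma>0$, $c>0$, $a>0$, $\lambda>0$; standing assumption (A): $a>\max\{1,2\mu\}$ and $\mu>\max\{c,\sigma^2/2\}$. $f(z)=\mu z+\lambda\ln\big[\lambda(e^{\frac{a}{\lambda}(1-z)}-1)/(1-z)\big]$ for $z\ne1$, $f(1)=\mu+\lambda\ln a$. The ODE (E) is $\frac12\sigma^2v''(x)+f(v'(x))-cv(x)=0$ on $[0,\infty)$ with $v(0)=0$. A function $u$ that is upper (resp. lower) semicontinuous on $[0,\infty)$ is a viscosity subsolution (resp. supersolution) of (E) if $u(0)=0$ and for every $x\in(0,\infty)$ and every $\varphi\in C^2(\mathbb R)$ with $0=(u-\varphi)(x)=\max_{y\in(0,\infty)}(u-\varphi)(y)$ (resp. $\min$), one has $\frac12\sigma^2\varphi''(x)+f(\varphi'(x))-cu(x)\ge0$ (resp. $\le0$). A viscosity solution is a continuous function that is both. *)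

From Stdlib Require Import Reals Lra.
From Coquelicot Require Import Coquelicot.
Open Scope R_scope.

Definition fE (mu a lambda : R) (z : R) : R :=
  match Req_EM_T z 1 with
  | left _ => mu + lambda * ln a
  | right _ => mu * z + lambda * ln (lambda * (exp (a / lambda * (1 - z)) - 1) / (1 - z))
  end.

Definition C2 (phi : R -> R) : Prop :=
  (forall x, ex_derive phi x) /\
  (forall x, ex_derive (Derive phi) x) /\
  (forall x, continuous (Derive (Derive phi)) x).

Definition usc_on_nonneg (u : R -> R) : Prop :=
  forall x, 0 <= x -> forall eps, 0 < eps -> exists delta, 0 < delta /\
    forall y, 0 <= y -> Rabs (y - x) < delta -> u y < u x + eps.

Definition lsc_on_nonneg (u : R -> R) : Prop :=
  forall x, 0 <= x -> forall eps, 0 < eps -> exists delta, 0 < delta /\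
    forall y, 0 <= y -> Rabs (y - x) < delta -> u x - eps < u y.

Definition visc_subsolution (mu sigma c a lambda : R) (u : R -> R) : Prop :=
  usc_on_nonneg u /\ u 0 = 0 /\
  forall x (phi : R -> R), 0 < x -> C2 phi ->
    u x - phi x = 0 ->
    (forall y, 0 < y -> u y - phi y <= u x - phi x) ->
    1 / 2 * sigma ^ 2 * Derive (Derive phi) x + fE mu a lambda (Derive phi x) - c * u x >= 0.

Definition visc_supersolution (mu sigma c a lambda : R) (u : R -> R) : Prop :=
  lsc_on_nonneg u /\ u 0 = 0 /\
  forall x (phi : R -> R), 0 < x -> C2 phi ->
    u x - phi x = 0 ->
    (forall y, 0 < y -> u x - phi x <= u y - phi y) ->
    1 / 2 * sigma ^ 2 * Derive (Derive phi) x + fE mu a lambda (Derive phi x) - c * u x <= 0.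

(* Both barriers are built from smooth pieces, so the viscosity tests reduce
   to classical ones: if a C^2 function phi touches a smooth function from
   below (above) at x, then the first derivatives agree and phi'' is bounded
   above (below) by the second derivative of the smooth function.
   The upper barrier min(U(x), U(b)), with U(x) = A/M (1 - e^{-Mx}), is a
   minimum of two smooth functions, and a function touched from below by phi
   at x is still touched from below by any smooth branch that equals it at x;
   hence we test with the branch U for x <= b and the constant U(b) for x >= b. *)

From Stdlib Require Import Reals Lra.
From Coquelicot Require Import Coquelicot.
Open Scope R_scope.

Lemma local_min_first_order (h : R -> R) (x l d : R) :
  0 < d -> derivable_pt_lim h x l ->
  (forall y, Rabs (y - x) < d -> h x <= h y) -> l = 0.
Proof.
intros Hd Hl Hmin.
pose (pr := exist (fun l => derivable_pt_lim h x l) l Hl : derivable_pt h x).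
apply (deriv_minimum h (x - d) (x + d) x pr); try lra.
intros y H1 H2. apply Hmin. apply Rabs_def1; lra.
Qed.

(* Second-order condition at a local minimum: h' x = 0 and h''(x) >= 0.
   If h''(x) < 0, then h' < 0 just right of x, so h decreases there. *)
Lemma local_min_second_order (h h' : R -> R) (x h2 d : R) :
  0 < d -> (forall y, derivable_pt_lim h y (h' y)) -> derivable_pt_lim h' x h2 ->
  (forall y, Rabs (y - x) < d -> h x <= h y) -> h' x = 0 /\ 0 <= h2.
Proof.
intros Hd Hh Hh' Hmin.
assert (Hcrit : h' x = 0) by exact (local_min_first_order h x (h' x) d Hd (Hh x) Hmin).
split; [exact Hcrit|].
destruct (Rle_or_lt 0 h2) as [|Hneg]; [assumption|exfalso].
destruct (Hh' (- h2 / 2) ltac:(lra)) as [del Hdel].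
set (e := Rmin (del / 2) (d / 2)).
assert (He : 0 < e) by (unfold e; apply Rmin_glb_lt; destruct del; simpl; lra).
assert (He1 : e <= del / 2) by apply Rmin_l.
assert (He2 : e <= d / 2) by apply Rmin_r.
assert (Hdecr : forall t, 0 < t <= e -> h' (x + t) < 0).
{ intros t Ht.
  assert (Hq : Rabs ((h' (x + t) - h' x) / t - h2) < - h2 / 2).
  { apply Hdel; [lra|]. rewrite Rabs_right; lra. }
  rewrite Hcrit, Rminus_0_r in Hq. apply Rabs_def2 in Hq.
  replace (h' (x + t)) with (h' (x + t) / t * t) by (field; lra).
  apply Rmult_neg_pos; lra. }
destruct (MVT_cor2 h h' x (x + e) ltac:(lra)) as [c [Hc1 Hc2]].
{ intros c _. apply Hh. }
assert (Hc : h' c < 0) by (replace c with (x + (c - x)) by ring; apply Hdecr; lra).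
assert (h x <= h (x + e)) by (apply Hmin; rewrite Rabs_right; lra).
assert (h (x + e) - h x < 0) by (rewrite Hc1; apply Rmult_neg_pos; lra).
lra.
Qed.

Lemma C2_derivatives (phi : R -> R) : C2 phi ->
  (forall y, derivable_pt_lim phi y (Derive phi y)) /\
  (forall y, derivable_pt_lim (Derive phi) y (Derive (Derive phi) y)).
Proof.
intros [H1 [H2 _]]. split; intros y; apply is_derive_Reals, Derive_correct; auto.
Qed.

Lemma touch_from_below (u v v' phi : R -> R) (v2 x d : R) :
  0 < d -> C2 phi ->
  (forall y, derivable_pt_lim v y (v' y)) -> derivable_pt_lim v' x v2 ->
  (forall y, Rabs (y - x) < d -> u y <= v y) -> u x = v x ->
  (forall y, Rabs (y - x) < d -> u x - phi x <= u y - phi y) ->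
  Derive phi x = v' x /\ Derive (Derive phi) x <= v2.
Proof.
intros Hd HC2 Hv Hv' Hle Heq Hmin. destruct (C2_derivatives phi HC2) as [D1 D2].
destruct (local_min_second_order (fun y => v y - phi y) (fun y => v' y - Derive phi y)
            x (v2 - Derive (Derive phi) x) d Hd) as [F1 F2].
- intros y. apply derivable_pt_lim_minus; auto.
- apply derivable_pt_lim_minus; auto.
- intros y Hy. specialize (Hmin y Hy). specialize (Hle y Hy). lra.
- split; lra.
Qed.

Lemma touch_from_above (u u' phi : R -> R) (u2 x d : R) :
  0 < d -> C2 phi ->
  (forall y, derivable_pt_lim u y (u' y)) -> derivable_pt_lim u' x u2 ->
  (forall y, Rabs (y - x) < d -> u y - phi y <= u x - phi x) ->
  Derive phi x = u' x /\ u2 <= Derive (Derive phi) x.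
Proof.
intros Hd HC2 Hu Hu' Hmax. destruct (C2_derivatives phi HC2) as [D1 D2].
destruct (local_min_second_order (fun y => phi y - u y) (fun y => Derive phi y - u' y)
            x (Derive (Derive phi) x - u2) d Hd) as [F1 F2].
- intros y. apply derivable_pt_lim_minus; auto.
- apply derivable_pt_lim_minus; auto.
- intros y Hy. specialize (Hmax y Hy). lra.
- split; lra.
Qed.

(* Points within distance x of x > 0 are positive: the viscosity tests on
   (0, oo) therefore give local extrema on a neighbourhood of radius x. *)
Lemma near_positive (x y : R) : Rabs (y - x) < x -> 0 < y.
Proof. intros Hy. apply Rabs_def2 in Hy. lra. Qed.

Lemma continuous_semicontinuous (u : R -> R) :
  (forall x, continuity_pt u x) -> usc_on_nonneg u /\ lsc_on_nonneg u.
Proof.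
intros Hu.
assert (Hclose : forall x eps, 0 < eps -> exists delta, 0 < delta /\
          forall y, Rabs (y - x) < delta -> Rabs (u y - u x) < eps).
{ intros x eps He. destruct (Hu x eps He) as [d [Hd Hf]]. exists d. split; [exact Hd|].
  intros y Hy. destruct (Req_dec y x) as [->|Hne].
  - rewrite Rminus_eq_0, Rabs_R0. exact He.
  - apply (Hf y). split; [split; [exact I|auto]|exact Hy]. }
split; intros x _ eps He; destruct (Hclose x eps He) as [d [Hd Hf]];
  exists d; split; auto; intros y _ Hy; specialize (Hf y Hy); apply Rabs_def2 in Hf; lra.
Qed.

(* Truncation at level b is continuous (it is 1-Lipschitz). *)
Lemma Rmin_continuity (b x : R) : continuity_pt (fun y => Rmin y b) x.
Proof.
intros eps He. exists eps. split; [exact He|]. intros y [_ Hy]. simpl in *. unfold R_dist in *.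
eapply Rle_lt_trans; [|exact Hy].
unfold Rmin. destruct (Rle_dec y b), (Rle_dec x b); unfold Rabs; repeat destruct Rcase_abs; lra.
Qed.

Lemma exp_monotone (s t : R) : s <= t -> exp s <= exp t.
Proof. intros [Hlt|Heq]; [left; apply exp_increasing; exact Hlt|rewrite Heq; lra]. Qed.

(* sinh t >= t for t >= 0, by the mean value theorem: the derivative of
   e^t - e^{-t} - 2t is (e^{t/2} - e^{-t/2})^2 >= 0. *)
Lemma sinh_lower (t : R) : 0 <= t -> 2 * t <= exp t - exp (- t).
Proof.
intros Ht. destruct (Req_dec t 0) as [->|Ht0].
{ rewrite Ropp_0, exp_0. lra. }
set (k := fun t => exp t - exp (- t) - 2 * t).
destruct (MVT_cor2 k (fun t => exp t + exp (- t) - 2) 0 t ltac:(lra)) as [s [Hs _]].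
{ intros s _. apply is_derive_Reals. unfold k. auto_derive; auto. ring. }
assert (Hslope : 0 <= exp s + exp (- s) - 2).
{ rewrite exp_Ropp. assert (P := exp_pos s).
  replace (exp s + / exp s - 2) with ((exp s - 1) ^ 2 / exp s) by (field; lra).
  apply Rmult_le_pos; [apply pow2_ge_0|left; apply Rinv_0_lt_compat; lra]. }
assert (Hk0 : k 0 = 0) by (unfold k; rewrite Ropp_0, exp_0; ring).
assert (0 <= k t) by nra.
unfold k in *. lra.
Qed.

Lemma exp_chord_lower (s : R) : 0 < s -> s * exp (s / 2) <= exp s - 1.
Proof.
intros Hs. assert (Hsinh := sinh_lower (s / 2) ltac:(lra)).
assert (P := exp_pos (s / 2)).
assert (Hsq : exp s = exp (s / 2) * exp (s / 2)) by (rewrite <- exp_plus; f_equal; field).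
assert (Hinv : exp (- (s / 2)) * exp (s / 2) = 1) by (rewrite exp_Ropp; field; lra).
rewrite Hsq. nra.
Qed.

(* The ratio (1 - e^{-t}) / t, which governs f beyond 1. *)
Definition decay_ratio (t : R) : R := (1 - exp (- t)) / t.

Lemma decay_ratio_pos (t : R) : 0 < t -> 0 < decay_ratio t.
Proof.
intros Ht. assert (exp (- t) < 1) by (rewrite <- exp_0; apply exp_increasing; lra).
unfold decay_ratio, Rdiv. apply Rmult_lt_0_compat; [lra|apply Rinv_0_lt_compat; lra].
Qed.

(* decay_ratio is nonincreasing on (0, oo): the numerator of its derivative is
   e^{-t} (1 + t - e^t) <= 0. *)
Lemma decay_ratio_antitone (t1 t2 : R) :
  0 < t1 -> t1 <= t2 -> decay_ratio t2 <= decay_ratio t1.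
Proof.
intros H1 H2. destruct (Req_dec t1 t2) as [<-|Hne]; [lra|].
set (d := fun t => (exp (- t) * t - (1 - exp (- t))) / (t * t)).
destruct (MVT_cor2 decay_ratio d t1 t2 ltac:(lra)) as [s [Hs1 Hs2]].
{ intros s Hs. apply is_derive_Reals. unfold decay_ratio, d. auto_derive; [lra|field; lra]. }
assert (Hd : d s <= 0).
{ unfold d. assert (I := exp_ineq1 s ltac:(lra)).
  assert (Hinv : exp (- s) * exp s = 1) by (rewrite exp_Ropp; field; apply Rgt_not_eq, exp_pos).
  assert (P := exp_pos (- s)).
  assert (exp (- s) * s - (1 - exp (- s)) <= 0) by nra.
  unfold Rdiv. apply Rmult_le_0_r; auto. left. apply Rinv_0_lt_compat. nra. }
nra.
Qed.

(* Lower bound for f on (0,1): f(p) >= mu p + a (1 - p) / 2 when a >= 1,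
   since the argument of the logarithm is a (e^s - 1)/s >= e^{s/2},
   s = a (1 - p) / lambda. *)
Lemma fE_lower_on_unit (mu a lambda p : R) :
  0 < lambda -> 1 <= a -> 0 < p < 1 ->
  mu * p + a * (1 - p) / 2 <= fE mu a lambda p.
Proof.
intros Hl Ha Hp. unfold fE. destruct (Req_EM_T p 1) as [E|_]; [lra|].
set (s := a / lambda * (1 - p)).
assert (Hs : 0 < s).
{ unfold s. apply Rmult_lt_0_compat; [apply Rdiv_lt_0_compat|]; lra. }
assert (Hchord := exp_chord_lower s Hs).
assert (P := exp_pos (s / 2)).
assert (Harg : exp (s / 2) <= lambda * (exp s - 1) / (1 - p)).
{ replace (lambda * (exp s - 1) / (1 - p)) with (a * ((exp s - 1) / s))
    by (unfold s; field; repeat split; lra).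
  assert (exp (s / 2) <= (exp s - 1) / s).
  { apply Rmult_le_reg_r with s; [exact Hs|].
    unfold Rdiv. rewrite Rmult_assoc, Rinv_l; lra. }
  nra. }
assert (Hln := ln_le _ _ P Harg). rewrite ln_exp in Hln.
assert (lambda * (s / 2) = a * (1 - p) / 2) by (unfold s; field; lra).
nra.
Qed.

Lemma fE_above_one (mu a lambda z : R) : 0 < lambda -> 0 < a -> 1 < z ->
  fE mu a lambda z = mu * z + lambda * ln (a * decay_ratio (a / lambda * (z - 1))).
Proof.
intros Hl Ha Hz. unfold fE, decay_ratio. destruct (Req_EM_T z 1) as [E|_]; [lra|].
replace (a * ((1 - exp (- (a / lambda * (z - 1)))) / (a / lambda * (z - 1))))
  with (lambda * (exp (a / lambda * (1 - z)) - 1) / (1 - z)); [reflexivity|].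
replace (- (a / lambda * (z - 1))) with (a / lambda * (1 - z)) by ring.
field. repeat split; lra.
Qed.

(* If f(H) = mu H with H > 1, then f(z) <= mu z for all z >= H, since the
   argument of the logarithm is nonincreasing in z and equals 1 at H. *)
Lemma fE_le_linear_beyond (mu a lambda H z : R) :
  0 < lambda -> 0 < a -> 1 < H -> H <= z ->
  fE mu a lambda H = mu * H -> fE mu a lambda z <= mu * z.
Proof.
intros Hl Ha HH Hz Hf.
rewrite fE_above_one in * by lra.
set (t1 := a / lambda * (H - 1)) in *. set (t2 := a / lambda * (z - 1)).
assert (Hal : 0 < a / lambda) by (apply Rdiv_lt_0_compat; lra).
assert (T1 : 0 < t1) by (unfold t1; apply Rmult_lt_0_compat; lra).
assert (T12 : t1 <= t2) by (unfold t1, t2; apply Rmult_le_compat_l; lra).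
assert (P1 := decay_ratio_pos t1 T1). assert (P2 := decay_ratio_pos t2 ltac:(lra)).
assert (Hone : a * decay_ratio t1 = 1).
{ apply ln_inv; [apply Rmult_lt_0_compat; lra|lra|]. rewrite ln_1.
  apply Rmult_eq_reg_l with lambda; lra. }
assert (a * decay_ratio t2 <= 1).
{ rewrite <- Hone. apply Rmult_le_compat_l; [lra|]. apply decay_ratio_antitone; lra. }
assert (ln (a * decay_ratio t2) <= 0).
{ rewrite <- ln_1. apply ln_le; [apply Rmult_lt_0_compat|]; lra. }
nra.
Qed.

Definition exp_barrier (A M x : R) : R := A / M * (1 - exp (- M * x)).

Lemma exp_barrier_derivative (A M y : R) : M <> 0 ->
  derivable_pt_lim (exp_barrier A M) y (A * exp (- M * y)).
Proof. intros HM. apply is_derive_Reals. unfold exp_barrier. auto_derive; auto. field. exact HM. Qed.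

Lemma exp_barrier_second_derivative (A M y : R) :
  derivable_pt_lim (fun y => A * exp (- M * y)) y (- M * (A * exp (- M * y))).
Proof. apply is_derive_Reals. auto_derive; auto. ring. Qed.

Lemma exp_barrier_monotone (A M x y : R) : 0 <= A -> 0 < M -> x <= y ->
  exp_barrier A M x <= exp_barrier A M y.
Proof.
intros HA HM Hxy. unfold exp_barrier.
assert (exp (- M * y) <= exp (- M * x)) by (apply exp_monotone; nra).
assert (0 <= A / M) by (apply Rdiv_le_0_compat; lra). nra.
Qed.

(* The lower barrier 1 - e^{-x} is a viscosity subsolution: at a contact
   point, p = e^{-x} in (0,1) and phi'' >= -p, so the equation is bounded
   below by (mu - sigma^2/2) p + (a/2 - c)(1 - p) >= 0. *)
Lemma lower_barrier_subsolution (mu sigma c a lambda : R) :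
  0 < lambda -> 1 <= a -> 2 * c <= a -> sigma ^ 2 / 2 <= mu ->
  visc_subsolution mu sigma c a lambda (fun x => 1 - exp (- x)).
Proof.
intros Hl Ha Hac Hms.
assert (D1 : forall y, derivable_pt_lim (fun y => 1 - exp (- y)) y (exp (- y))).
{ intros y. apply is_derive_Reals. auto_derive; auto. ring. }
assert (D2 : forall y, derivable_pt_lim (fun y => exp (- y)) y (- exp (- y))).
{ intros y. apply is_derive_Reals. auto_derive; auto. ring. }
split; [|split].
- apply continuous_semicontinuous. intros x.
  apply derivable_continuous_pt. exists (exp (- x)). apply D1.
- rewrite Ropp_0, exp_0. ring.
- intros x phi Hx HC2 _ Hmax.
  destruct (touch_from_above (fun y => 1 - exp (- y)) (fun y => exp (- y)) phi
              (- exp (- x)) x x Hx HC2 D1 (D2 x)) as [Hd1 Hd2].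
  { intros y Hy. exact (Hmax y (near_positive x y Hy)). }
  rewrite Hd1. set (p := exp (- x)) in *.
  assert (Hp : 0 < p < 1).
  { split; [apply exp_pos|]. rewrite <- exp_0. apply exp_increasing. lra. }
  assert (Hf := fE_lower_on_unit mu a lambda p Hl Ha Hp).
  assert (Hs2 : 0 <= sigma ^ 2) by apply pow2_ge_0.
  nra.
Qed.

(* For x <= b
   the branch U gives phi' = p = A e^{-Mx} >= H and phi'' <= -M p, whence
   f(p) <= mu p <= sigma^2 M p / 2; for x >= b the constant branch gives
   phi' = 0, phi'' <= 0, and f(0) <= c U(b). *)
Lemma upper_barrier_supersolution (mu sigma c a lambda H M A b : R) :
  0 < lambda -> 0 < a -> 0 < c -> 0 < M -> 2 * mu <= sigma ^ 2 * M -> 0 <= b ->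
  1 < H -> fE mu a lambda H = mu * H -> H <= A * exp (- M * b) ->
  fE mu a lambda 0 <= c * exp_barrier A M b ->
  visc_supersolution mu sigma c a lambda (fun x => exp_barrier A M (Rmin x b)).
Proof.
intros Hl Ha Hc HM HMs Hb HH HfH Hslope Hf0.
assert (HA : 0 < A).
{ assert (P := exp_pos (- M * b)).
  destruct (Rle_or_lt A 0); [nra|lra]. }
assert (Hs2 : 0 <= sigma ^ 2) by apply pow2_ge_0.
assert (Hbelow_U : forall y, exp_barrier A M (Rmin y b) <= exp_barrier A M y).
{ intros y. apply exp_barrier_monotone; [lra|lra|apply Rmin_l]. }
assert (Hbelow_Ub : forall y, exp_barrier A M (Rmin y b) <= exp_barrier A M b).
{ intros y. apply exp_barrier_monotone; [lra|lra|apply Rmin_r]. }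
split; [|split].
- apply continuous_semicontinuous. intros x.
  apply (continuity_pt_comp (fun y => Rmin y b)); [apply Rmin_continuity|].
  apply derivable_continuous_pt. eexists. apply exp_barrier_derivative. lra.
- rewrite Rmin_left by lra. unfold exp_barrier. rewrite Rmult_0_r, exp_0. ring.
- intros x phi Hx HC2 _ Hmin.
  assert (Hmin_near : forall y, Rabs (y - x) < x ->
            exp_barrier A M (Rmin x b) - phi x <= exp_barrier A M (Rmin y b) - phi y).
  { intros y Hy. exact (Hmin y (near_positive x y Hy)). }
  destruct (Rle_or_lt x b) as [Hxb|Hxb].
  + destruct (touch_from_below (fun y => exp_barrier A M (Rmin y b)) (exp_barrier A M)
                (fun y => A * exp (- M * y)) phi (- M * (A * exp (- M * x))) x x Hx HC2)
      as [Hd1 Hd2]; auto.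
    { intros y. apply exp_barrier_derivative. lra. }
    { apply exp_barrier_second_derivative. }
    { rewrite Rmin_left by lra. reflexivity. }
    rewrite Hd1. rewrite Rmin_left by lra. set (p := A * exp (- M * x)) in *.
    assert (Hp : H <= p).
    { unfold p. apply Rle_trans with (1 := Hslope). apply Rmult_le_compat_l; [lra|].
      apply exp_monotone. nra. }
    assert (Hf := fE_le_linear_beyond mu a lambda H p Hl Ha HH Hp HfH).
    assert (HU : 0 <= exp_barrier A M x).
    { replace 0 with (exp_barrier A M 0) by (unfold exp_barrier; rewrite Rmult_0_r, exp_0; ring).
      apply exp_barrier_monotone; lra. }
    nra.
  + destruct (touch_from_below (fun y => exp_barrier A M (Rmin y b))
                (fun _ => exp_barrier A M b) (fun _ => 0) phi 0 x x Hx HC2) as [Hd1 Hd2]; auto.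
    { intros y. apply derivable_pt_lim_const. }
    { apply derivable_pt_lim_const. }
    { rewrite Rmin_right by lra. reflexivity. }
    rewrite Hd1. rewrite Rmin_right by lra. nra.
Qed.

(* The two barriers are ordered as soon as M >= 1 and U(b) >= 1: on [0, b]
   because A/M >= 1 and e^{-Mx} <= e^{-x}, beyond b because 1 - e^{-x} < 1. *)
Lemma barriers_ordered (A M b : R) : 1 <= M -> 1 <= exp_barrier A M b ->
  forall x, 0 <= x -> 1 - exp (- x) <= exp_barrier A M (Rmin x b).
Proof.
intros HM Hb x Hx. unfold exp_barrier in *.
assert (Hexp : forall y, 0 < exp y) by apply exp_pos.
destruct (Rle_or_lt x b) as [Hxb|Hxb].
- rewrite Rmin_left by lra.
  assert (HAM : 1 <= A / M).
  { assert (exp (- M * b) <= 1) by (rewrite <- exp_0; apply exp_monotone; nra).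
    specialize (Hexp (- M * b)). nra. }
  assert (exp (- M * x) <= exp (- x)) by (apply exp_monotone; nra).
  assert (exp (- M * x) <= 1) by (rewrite <- exp_0; apply exp_monotone; nra).
  nra.
- rewrite Rmin_right by lra. specialize (Hexp (- x)). lra.
Qed.

Lemma exp_gt_of_ln_lt (X M b : R) : 0 < X -> 0 < M -> 1 / M * ln X < b -> X < exp (M * b).
Proof.
intros HX HM Hb. rewrite <- (exp_ln X HX). apply exp_increasing.
apply Rmult_lt_compat_l with (r := M) in Hb; [|lra].
replace (M * (1 / M * ln X)) with (ln X) in Hb by (field; lra). lra.
Qed.

Lemma exp_lt_of_lt_ln (X M b : R) : 0 < X -> 0 < M -> b < 1 / M * ln X -> exp (M * b) < X.
Proof.
intros HX HM Hb. rewrite <- (exp_ln X HX). apply exp_increasing.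
apply Rmult_lt_compat_l with (r := M) in Hb; [|lra].
replace (M * (1 / M * ln X)) with (ln X) in Hb by (field; lra). lra.
Qed.

Lemma exp_barrier_level (A M K b : R) : 0 < A -> K < A -> 0 < M ->
  1 / M * ln (A / (A - K)) < b -> K / M < exp_barrier A M b.
Proof.
intros HA HK HM Hb.
assert (Hlt := exp_gt_of_ln_lt (A / (A - K)) M b ltac:(apply Rdiv_lt_0_compat; lra) HM Hb).
assert (Hinv : exp (- M * b) * exp (M * b) = 1)
  by (rewrite <- exp_plus; replace (- M * b + M * b) with 0 by ring; apply exp_0).
assert (P := exp_pos (- M * b)).
assert (HAK : A < exp (M * b) * (A - K)).
{ apply Rmult_lt_compat_r with (r := A - K) in Hlt; [|lra].
  replace (A / (A - K) * (A - K)) with A in Hlt by (field; lra). lra. }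
assert (A * exp (- M * b) < A - K) by nra.
unfold exp_barrier. apply Rmult_lt_reg_r with M; [exact HM|].
replace (K / M * M) with K by (field; lra).
replace (A / M * (1 - exp (- M * b)) * M) with (A - A * exp (- M * b)) by (field; lra).
lra.
Qed.

Lemma exp_barrier_slope (A M H b : R) : 0 < H -> 0 < A -> 0 < M ->
  b < 1 / M * ln (A / H) -> H < A * exp (- M * b).
Proof.
intros HH HA HM Hb.
assert (Hlt := exp_lt_of_lt_ln (A / H) M b ltac:(apply Rdiv_lt_0_compat; lra) HM Hb).
replace (- M * b) with (- (M * b)) by ring. rewrite exp_Ropp.
assert (P := exp_pos (M * b)).
apply Rmult_lt_reg_r with (exp (M * b)); [exact P|].
replace (A * / exp (M * b) * exp (M * b)) with A by (field; lra).
apply Rmult_lt_compat_r with (r := H) in Hlt; [|exact HH].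
replace (A / H * H) with A in Hlt by (field; lra). lra.
Qed.

(* Proposition 3.4.  Only the parts M + H, f(0)/c M + H of the condition on A
   and ln(A/H) of the upper condition on b are needed. *)
Theorem proposition3p4 (mu sigma c a lambda H M A b : R)
  (Hsigma : 0 < sigma) (Hc : 0 < c) (Ha0 : 0 < a) (Hlambda : 0 < lambda)
  (HA1 : a > Rmax 1 (2 * mu)) (HA2 : mu > Rmax c (sigma ^ 2 / 2))
  (HH : 1 < H < 1 + lambda) (HfH : fE mu a lambda H = mu * H)
  (HM : M > 2 * mu / sigma ^ 2)
  (HApos : 0 < A) (Hbpos : 0 < b)
  (HA : A > Rmax (Rmax (M + H) (fE mu a lambda 0 / c * M + H))
               (Rmax (sigma ^ 2 * M ^ 2 / (sigma ^ 2 * M - 2 * mu))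
                     (fE mu a lambda 0 / c * (sigma ^ 2 * M ^ 2 / (sigma ^ 2 * M - 2 * mu)))))
  (Hb1 : 1 / M * Rmax (ln (A / (A - M))) (ln (A / (A - fE mu a lambda 0 / c * M))) < b)
  (Hb2 : b < 1 / M * Rmin (ln (A / H)) (ln (sigma ^ 2 / (2 * mu) * M))) :
  let psi_low := fun x : R => 1 - exp (- x) in
  let psi_up := fun x : R => A / M * (1 - exp (- M * Rmin x b)) in
  visc_subsolution mu sigma c a lambda psi_low /\
  visc_supersolution mu sigma c a lambda psi_up /\
  (forall x, 0 <= x -> psi_low x <= psi_up x).
Proof.
cbv zeta. change (fun x => A / M * (1 - exp (- M * Rmin x b)))
  with (fun x => exp_barrier A M (Rmin x b)).
apply Rmax_Rlt in HA1 as [Ha1 Ha2]. apply Rmax_Rlt in HA2 as [Hmc Hms].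
apply Rmax_Rlt in HA as [HA _]. apply Rmax_Rlt in HA as [HAM HAf].
assert (Hs2 : 0 < sigma ^ 2) by (apply pow_lt; lra).
assert (HMs : 2 * mu < sigma ^ 2 * M).
{ apply Rmult_lt_compat_l with (r := sigma ^ 2) in HM; [|exact Hs2].
  replace (sigma ^ 2 * (2 * mu / sigma ^ 2)) with (2 * mu) in HM by (field; lra). lra. }
assert (HM1 : 1 < M) by nra.
assert (Hinv : 0 <= 1 / M) by (apply Rlt_le, Rdiv_lt_0_compat; lra).
rewrite <- RmaxRmult in Hb1 by exact Hinv. apply Rmax_Rlt in Hb1 as [HbM Hbf].
rewrite Rmult_min_distr_l in Hb2 by exact Hinv. apply Rmin_Rgt in Hb2 as [HbH _].
assert (Hlevel1 := exp_barrier_level A M M b HApos ltac:(lra) ltac:(lra) HbM).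
assert (Hlevel0 := exp_barrier_level A M (fE mu a lambda 0 / c * M) b HApos ltac:(lra) ltac:(lra) Hbf).
replace (M / M) with 1 in Hlevel1 by (field; lra).
replace (fE mu a lambda 0 / c * M / M) with (fE mu a lambda 0 / c) in Hlevel0 by (field; lra).
assert (Hf0 : fE mu a lambda 0 <= c * exp_barrier A M b).
{ apply Rmult_lt_compat_l with (r := c) in Hlevel0; [|exact Hc].
  replace (c * (fE mu a lambda 0 / c)) with (fE mu a lambda 0) in Hlevel0 by (field; lra). lra. }
assert (Hslope := exp_barrier_slope A M H b ltac:(lra) HApos ltac:(lra) HbH).
split; [|split].
- apply lower_barrier_subsolution; lra.
- apply (upper_barrier_supersolution mu sigma c a lambda H); lra.
- apply barriers_ordered; lra.
Qed.
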